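(* Let $\varphi\colon\Gamma\to K$ be a surjective homomorphism of discrete groups. Then for every $\mathbb{R}$-generated Banach $K$-module $V$, the restriction map $H^2_b(\varphi;V)\colon H^2_b(K;V)\to H^2_b(\Gamma;\varphi^{-1}V)$ is injective.
   Context: An $\mathbb{R}$-generated Banach $K$-module is one of the form $\ell^\infty(S,\mathbb{R})$ for a $K$-set $S$, with $(k\cdot f)(s)=f(k^{-1}s)$. $\varphi^{-1}V$ is $V$ with $\Gamma$ acting through $\varphi$, and the restriction map is induced by precomposition with $\varphi$ on bounded invariant cochains of the standard resolution. *)

From Stdlib Require Import Reals.
Open Scope R_scope.
Set Implicit Arguments.
Unset Strict Implicit.

Record Grp := {
  gT :> Type;
  gmul : gT -> gT -> gT;
  gone : gT;
  ginv : gT -> gT;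
  gmulA : forall x y z, gmul x (gmul y z) = gmul (gmul x y) z;
  gmul1 : forall x, gmul gone x = x;
  gmulV : forall x, gmul (ginv x) x = gone
}.

Record Hom (G H : Grp) := {
  hom :> G -> H;
  homM : forall x y, hom (@gmul G x y) = @gmul H (hom x) (hom y)
}.

Definition surj {A B : Type} (f : A -> B) := forall b, exists a, f a = b.

Definition is_action (G : Grp) (S : Type) (act : G -> S -> S) :=
  (forall s, act (@gone G) s = s) /\
  (forall g h s, act (@gmul G g h) s = act g (act h s)).

(** Cochains of the standard (homogeneous) resolution with values in
    V = l^oo(S,R): a degree-n cochain is a map G^(n+1) -> (S -> R).
    Boundedness is w.r.t. the sup norm ||c|| = sup_x sup_s |c x s|
    (which also forces every value to lie in l^oo(S,R)). *)
Definition bounded1 (G : Grp) (S : Type) (c : G -> G -> S -> R) :=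
  exists M, forall x0 x1 s, Rabs (c x0 x1 s) <= M.
Definition bounded2 (G : Grp) (S : Type) (c : G -> G -> G -> S -> R) :=
  exists M, forall x0 x1 x2 s, Rabs (c x0 x1 x2 s) <= M.

(** G-invariance: c (g x0, ..., g xn) = g . c (x0, ..., xn),
    where (g . v)(s) = v (g^-1 s). *)
Definition invariant1 (G : Grp) (S : Type) (act : G -> S -> S)
  (c : G -> G -> S -> R) :=
  forall g x0 x1 s, c (@gmul G g x0) (@gmul G g x1) s = c x0 x1 (act (@ginv G g) s).
Definition invariant2 (G : Grp) (S : Type) (act : G -> S -> S)
  (c : G -> G -> G -> S -> R) :=
  forall g x0 x1 x2 s,
    c (@gmul G g x0) (@gmul G g x1) (@gmul G g x2) s = c x0 x1 x2 (act (@ginv G g) s).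

Definition delta1 (G : Grp) (S : Type) (c : G -> G -> S -> R) :
  G -> G -> G -> S -> R :=
  fun x0 x1 x2 s => c x1 x2 s - c x0 x2 s + c x0 x1 s.
Definition delta2 (G : Grp) (S : Type) (c : G -> G -> G -> S -> R) :
  G -> G -> G -> G -> S -> R :=
  fun x0 x1 x2 x3 s => c x1 x2 x3 s - c x0 x2 x3 s + c x0 x1 x3 s - c x0 x1 x2 s.

(** Bounded invariant 2-cocycles: representatives of classes in H^2_b(G; V). *)
Definition bcocycle2 (G : Grp) (S : Type) (act : G -> S -> S)
  (f : G -> G -> G -> S -> R) :=
  bounded2 f /\ invariant2 act f /\
  (forall x0 x1 x2 x3 s, delta2 f x0 x1 x2 x3 s = 0).

Definition bcohomologous2 (G : Grp) (S : Type) (act : G -> S -> S)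
  (f g : G -> G -> G -> S -> R) :=
  exists c : G -> G -> S -> R, bounded1 c /\ invariant1 act c /\
    (forall x0 x1 x2 s, f x0 x1 x2 s - g x0 x1 x2 s = delta1 c x0 x1 x2 s).

Definition restr2 (Gam K : Grp) (phi : Hom Gam K) (S : Type)
  (f : K -> K -> K -> S -> R) : Gam -> Gam -> Gam -> S -> R :=
  fun x0 x1 x2 => f (phi x0) (phi x1) (phi x2).

(** The action of Gam on S through phi (the module phi^{-1} V). *)
Definition pull_act (Gam K : Grp) (phi : Hom Gam K) (S : Type)
  (act : K -> S -> S) : Gam -> S -> S :=
  fun g s => act (phi g) s.

From Stdlib Require Import Reals.
From Stdlib Require Import Lra ClassicalEpsilon.
Open Scope R_scope.
Set Implicit Arguments.
Unset Strict Implicit.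

(* Put h := f - g, a bounded K-invariant 2-cocycle, and let c be a bounded
   Gam-invariant 1-cochain with h o phi = delta1 c.  The whole point is that
   c descends to K, i.e. c x0 x1 only depends on (phi x0, phi x1):
   - on the kernel N of phi, n |-> c 1 n - h 1 1 1 is a homomorphism N -> R
     (cocycle relation + invariance) which is bounded, hence zero, because
     a bounded additive function on powers n, n^2, n^3, ... must vanish;
   - with invariance this computes c on the "diagonal" c x (x m), m in N, and
     the cocycle relation then shows c is unchanged by right multiplication
     of either argument by kernel elements.
   Choosing a set-theoretic section L of phi, the cochain
   (a0, a1) |-> c (L a0) (L a1) is then bounded, K-invariant, and its
   coboundary is h, which is the claim. *)

Section GroupFacts.
Variable G : Grp.

Lemma gmulV_r (x : G) : gmul x (ginv x) = gone G.
Proof.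
  rewrite <- (gmul1 (gmul x (ginv x))).
  rewrite <- (gmulV (ginv x)) at 1.
  rewrite <- gmulA, (gmulA (ginv x)), gmulV, gmul1.
  apply gmulV.
Qed.

Lemma gmul1_r (x : G) : gmul x (gone G) = x.
Proof. rewrite <- (gmulV x), gmulA, gmulV_r. apply gmul1. Qed.

Lemma ginv_unique (a b : G) : gmul a b = gone G -> a = ginv b.
Proof. intro H. rewrite <- (gmul1_r a), <- (gmulV_r b), gmulA, H. apply gmul1. Qed.

Lemma ginv1 : ginv (gone G) = gone G.
Proof. symmetry. apply ginv_unique. apply gmul1. Qed.

Lemma gmul_ginv_cancel (x y : G) : gmul x (gmul (ginv x) y) = y.
Proof. rewrite gmulA, gmulV_r. apply gmul1. Qed.

(* Positive powers: [gpow n j] is n^(j+1). *)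
Fixpoint gpow (n : G) (j : nat) : G :=
  match j with O => n | S j => gmul (gpow n j) n end.

End GroupFacts.

Lemma hom1 (G H : Grp) (phi : Hom G H) : phi (gone G) = gone H.
Proof.
  assert (Idem : phi (gone G) = gmul (phi (gone G)) (phi (gone G))).
  { rewrite <- homM, gmul1. reflexivity. }
  rewrite <- (gmul1 (phi (gone G))) at 1.
  rewrite <- (gmulV (phi (gone G))) at 1.
  rewrite <- gmulA, <- Idem. apply gmulV.
Qed.

Lemma homV (G H : Grp) (phi : Hom G H) (x : G) : phi (ginv x) = ginv (phi x).
Proof. apply ginv_unique. rewrite <- homM, gmulV. apply hom1. Qed.

Lemma hom_fiber_quotient (G H : Grp) (phi : Hom G H) (x y : G) :
  phi x = phi y -> phi (gmul (ginv x) y) = gone H.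
Proof. intro Hxy. rewrite homM, homV, <- Hxy. apply gmulV. Qed.

Lemma surj_section (A B : Type) (p : A -> B) :
  surj p -> exists L : B -> A, forall b, p (L b) = b.
Proof. intro Hp. exact (choice (fun b a => p a = b) Hp). Qed.

Lemma bounded_multiples_zero (a M : R) :
  (forall j : nat, Rabs (INR j * a) <= M) -> a = 0.
Proof.
  intro Hb. destruct (Req_dec a 0) as [Z | NZ]; [exact Z | exfalso].
  assert (Ha : 0 < Rabs a) by (apply Rabs_pos_lt; exact NZ).
  destruct (INR_unbounded (M / Rabs a)) as [j Hj].
  specialize (Hb j). rewrite Rabs_mult, (Rabs_right (INR j)) in Hb
    by (apply Rle_ge, pos_INR).
  apply Rmult_lt_compat_r with (r := Rabs a) in Hj; [|exact Ha].
  replace (M / Rabs a * Rabs a) with M in Hj by (field; lra). lra.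
Qed.

(* A bounded function additive on a multiplicatively closed subset P of a
   group vanishes on P: this is what kills the "kernel part" of c. *)
Lemma bounded_additive_zero (G : Grp) (P : G -> Prop) (p : G -> R) (M : R) :
  (forall n m, P n -> P m -> P (gmul n m)) ->
  (forall n m, P n -> P m -> p (gmul n m) = p n + p m) ->
  (forall n, P n -> Rabs (p n) <= M) ->
  forall n, P n -> p n = 0.
Proof.
  intros Pmul padd pbound n Pn.
  assert (Ppow : forall j, P (gpow n j)).
  { induction j; simpl; auto. }
  assert (ppow : forall j, p (gpow n j) = INR (S j) * p n).
  { induction j; simpl gpow.
    - simpl. lra.
    - rewrite padd, IHj by auto. rewrite (S_INR (S j)). lra. }
  apply (bounded_multiples_zero (M := M)). intro j.
  destruct j as [| j].
  - simpl. rewrite Rmult_0_l, Rabs_R0.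
    apply Rle_trans with (Rabs (p n)); [apply Rabs_pos | auto].
  - rewrite <- ppow. auto.
Qed.

Lemma bcocycle2_sub (G : Grp) (S : Type) (act : G -> S -> S)
  (f g : G -> G -> G -> S -> R) :
  bcocycle2 act f -> bcocycle2 act g ->
  bcocycle2 act (fun x0 x1 x2 s => f x0 x1 x2 s - g x0 x1 x2 s).
Proof.
  intros [[Mf Hfb] [Hfi Hfd]] [[Mg Hgb] [Hgi Hgd]].
  split; [| split].
  - exists (Mf + Mg). intros x0 x1 x2 s.
    apply Rle_trans with (Rabs (f x0 x1 x2 s) + Rabs (g x0 x1 x2 s)).
    + unfold Rminus. rewrite <- (Rabs_Ropp (g x0 x1 x2 s)). apply Rabs_triang.
    + specialize (Hfb x0 x1 x2 s). specialize (Hgb x0 x1 x2 s). lra.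
  - intros k x0 x1 x2 s. rewrite Hfi, Hgi. reflexivity.
  - intros x0 x1 x2 x3 s. specialize (Hfd x0 x1 x2 x3 s).
    specialize (Hgd x0 x1 x2 x3 s). unfold delta2 in *. lra.
Qed.

Section Descent.
Variables (Gam K : Grp) (phi : Hom Gam K) (S : Type) (act : K -> S -> S).
Hypothesis Hact : is_action act.
Variable h : K -> K -> K -> S -> R.
Hypothesis Hh : bcocycle2 act h.
Variable c : Gam -> Gam -> S -> R.
Hypothesis Hcb : bounded1 c.
Hypothesis Hci : invariant1 (pull_act phi act) c.
Hypothesis Hcd : forall x0 x1 x2 s, restr2 phi h x0 x1 x2 s = delta1 c x0 x1 x2 s.

Let e := gone Gam.
Let eK := gone K.

Lemma phi_e : phi e = eK.
Proof. apply hom1. Qed.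

Lemma c_on_kernel (n : Gam) (s : S) : phi n = eK -> c e n s = h eK eK eK s.
Proof.
  destruct Hh as [[Mh Hhb] _]. destruct Hcb as [Mc Hcb'].
  set (p := fun n => c e n s - h eK eK eK s).
  assert (padd : forall n m, phi n = eK -> phi m = eK ->
                 p (gmul n m) = p n + p m).
  { intros n' m Hn Hm. unfold p.
    pose proof (Hcd e n' (gmul n' m) s) as Cob.
    unfold restr2, delta1 in Cob. rewrite homM, phi_e, Hn, Hm in Cob.
    unfold eK in *. rewrite gmul1 in Cob.
    pose proof (Hci n' e m s) as Inv. unfold pull_act in Inv.
    rewrite gmul1_r, homV, Hn in Inv. unfold eK in *.
    rewrite ginv1, (proj1 Hact) in Inv. lra. }
  assert (pbound : forall n, phi n = eK -> Rabs (p n) <= Mc + Mh).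
  { intros n' _. unfold p, Rminus.
    apply Rle_trans with (Rabs (c e n' s) + Rabs (- h eK eK eK s));
      [apply Rabs_triang |].
    rewrite Rabs_Ropp. specialize (Hcb' e n' s). specialize (Hhb eK eK eK s). lra. }
  intro Hn.
  assert (Z : p n = 0).
  { apply (bounded_additive_zero (P := fun n => phi n = eK) (M := Mc + Mh)); auto.
    intros n' m Hn' Hm. rewrite homM, Hn', Hm. apply gmul1. }
  unfold p in Z. lra.
Qed.

(* Translating by x (invariance) gives c on the diagonal fibre. *)
Lemma c_diagonal (x m : Gam) (s : S) : phi m = eK ->
  c x (gmul x m) s = h (phi x) (phi x) (phi x) s.
Proof.
  intro Hm. destruct Hh as [_ [Hhi _]].
  pose proof (Hci x e m s) as Inv. unfold pull_act in Inv.
  rewrite gmul1_r in Inv. rewrite Inv, c_on_kernel by exact Hm.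
  pose proof (Hhi (phi x) eK eK eK s) as HInv. unfold eK in HInv |- *.
  rewrite gmul1_r in HInv. rewrite HInv, homV. reflexivity.
Qed.

Lemma c_right_kernel (x0 x1 m : Gam) (s : S) : phi m = eK -> c x0 (gmul x1 m) s = c x0 x1 s.
Proof.
  intro Hm. destruct Hh as [_ [_ Hhd]].
  pose proof (Hcd x0 x1 (gmul x1 m) s) as Cob. unfold restr2, delta1 in Cob.
  rewrite homM, Hm in Cob. unfold eK in Cob. rewrite gmul1_r in Cob.
  rewrite c_diagonal in Cob by exact Hm.
  specialize (Hhd (phi x0) (phi x1) (phi x1) (phi x1) s). unfold delta2 in Hhd. lra.
Qed.

Lemma c_left_kernel (x0 x1 n : Gam) (s : S) : phi n = eK -> c (gmul x0 n) x1 s = c x0 x1 s.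
Proof.
  intro Hn. destruct Hh as [_ [_ Hhd]].
  pose proof (Hcd x0 (gmul x0 n) x1 s) as Cob. unfold restr2, delta1 in Cob.
  rewrite homM, Hn in Cob. unfold eK in Cob. rewrite gmul1_r in Cob.
  rewrite c_diagonal in Cob by exact Hn.
  specialize (Hhd (phi x0) (phi x0) (phi x0) (phi x1) s). unfold delta2 in Hhd. lra.
Qed.

Lemma c_descends (x y x' y' : Gam) (s : S) : phi x = phi y -> phi x' = phi y' ->
  c x x' s = c y y' s.
Proof.
  intros Hxy Hxy'.
  rewrite <- (gmul_ginv_cancel x y), <- (gmul_ginv_cancel x' y').
  rewrite c_left_kernel, c_right_kernel; auto; apply hom_fiber_quotient; assumption.
Qed.

Lemma descended_primitive (L : K -> Gam) :
  (forall k, phi (L k) = k) ->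
  let b := fun a0 a1 s => c (L a0) (L a1) s in
  bounded1 b /\ invariant1 act b /\
  (forall a0 a1 a2 s, h a0 a1 a2 s = delta1 b a0 a1 a2 s).
Proof.
  intros HL b. split; [| split].
  - destruct Hcb as [Mc Hcb']. exists Mc. intros. apply Hcb'.
  - intros k a0 a1 s. unfold b.
    rewrite (c_descends (y := gmul (L k) (L a0)) (y' := gmul (L k) (L a1)))
      by (rewrite homM, !HL; reflexivity).
    rewrite Hci. unfold pull_act. rewrite homV, HL. reflexivity.
  - intros a0 a1 a2 s. pose proof (Hcd (L a0) (L a1) (L a2) s) as Cob.
    unfold restr2 in Cob. rewrite !HL in Cob. exact Cob.
Qed.

End Descent.

Theorem mainTheorem11 (Gam K : Grp) (phi : Hom Gam K) (Hsurj : surj phi)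
  (S : Type) (act : K -> S -> S) (Hact : is_action act)
  (f g : K -> K -> K -> S -> R)
  (Hf : bcocycle2 act f) (Hg : bcocycle2 act g)
  (Hres : bcohomologous2 (pull_act phi act) (restr2 phi f) (restr2 phi g)) :
  bcohomologous2 act f g.
Proof.
  destruct Hres as [c [Hcb [Hci Hcd]]].
  destruct (surj_section Hsurj) as [L HL].
  pose proof (bcocycle2_sub Hf Hg) as Hh.
  destruct (descended_primitive Hact Hh Hcb Hci Hcd HL) as [Hb [Hbi Hbd]].
  exists (fun a0 a1 s => c (L a0) (L a1) s). auto.
Qed.
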